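(* Let $A$ be a symmetric real $n\times n$ matrix, $w\in\mathbb{R}^n$ with all entries strictly positive, $W=\mathrm{diag}(w)$, and for nonzero $X\in\{0,1\}^n$ let $e(X)=-\frac{X'AX}{w'X}$ and $\nabla e(X)=w\,\frac{X'AX}{(w'X)^2}-AX\,\frac{2}{w'X}$. Fix a nonzero $X_t\in\{0,1\}^n$ and for $\delta\in\mathbb{R}$ define $$T_t(X,\delta)=\nabla e(X_t)'X+\delta\left(\frac{(\mathbf{1}-2X_t)'WX}{w'X_t}+1\right).$$ Then for every $\delta\ge-\lambda_0(W^{-1/2}AW^{-1/2})$ (where $\lambda_0$ is the smallest eigenvalue), $T_t(X,\delta)\ge e(X)$ for all nonzero $X\in\{0,1\}^n$ and $T_t(X_t,\delta)=e(X_t)$; i.e. $T_t(\cdot,\delta)$ is an auxiliary function for $e$ at $X_t$. In particular, $T_t$ is a pseudo-bound of $e$ at $X_t$.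
   Context: A family $B(X,\delta)$ is a pseudo-bound for $e$ at $X_t$ if for at least one parameter value $\delta'$ the function $B(\cdot,\delta')$ satisfies $B(X,\delta')\ge e(X)$ for all admissible $X$ and $B(X_t,\delta')=e(X_t)$. $\mathbf{1}$ is the all-ones vector. *)

From mathcomp Require Import all_boot all_order all_algebra.
Set Implicit Arguments. Unset Strict Implicit. Unset Printing Implicit Defensive.
Import Order.TTheory GRing.Theory Num.Theory.
Local Open Scope ring_scope.

Section Defs.
Variables (R : rcfType) (n : nat).

Definition binvec (X : 'cV[R]_n) : Prop := forall i, X i 0 = 0 \/ X i 0 = 1.
Definition admissible (X : 'cV[R]_n) : Prop := binvec X /\ X <> 0.

Definition dotv (u v : 'cV[R]_n) : R := (u^T *m v) 0 0.
Definition qform (A : 'M[R]_n) (X : 'cV[R]_n) : R := (X^T *m A *m X) 0 0.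

Definition Wdiag (w : 'cV[R]_n) : 'M[R]_n := diag_mx w^T.
Definition Wisqrt (w : 'cV[R]_n) : 'M[R]_n := diag_mx (\row_i (Num.sqrt (w i 0))^-1).

Definition e_fun (A : 'M[R]_n) (w X : 'cV[R]_n) : R := - (qform A X / dotv w X).

Definition grad_e (A : 'M[R]_n) (w X : 'cV[R]_n) : 'cV[R]_n :=
  (qform A X / (dotv w X) ^+ 2) *: w - (2 / dotv w X) *: (A *m X).

Definition T_fun (A : 'M[R]_n) (w Xt : 'cV[R]_n) (X : 'cV[R]_n) (delta : R) : R :=
  dotv (grad_e A w Xt) X
  + delta * (((const_mx 1 - 2%:R *: Xt)^T *m Wdiag w *m X) 0 0 / dotv w Xt + 1).

Definition smallest_eigenvalue (M : 'M[R]_n) (lam0 : R) : Prop :=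
  eigenvalue M lam0 /\ forall lam, eigenvalue M lam -> lam0 <= lam.

Definition pseudo_bound (B : 'cV[R]_n -> R -> R) (e : 'cV[R]_n -> R) (Xt : 'cV[R]_n) : Prop :=
  exists delta', (forall X, admissible X -> e X <= B X delta') /\ B Xt delta' = e Xt.

End Defs.

From mathcomp Require Import all_boot all_order all_algebra.
From mathcomp Require Import spectral sesquilinear complex.
From mathcomp Require Import ring lra.
Set Implicit Arguments.
Unset Strict Implicit.
Unset Printing Implicit Defensive.
Import Order.TTheory GRing.Theory Num.Theory.
Local Open Scope ring_scope.
Local Open Scope sesquilinear_scope.

(* Write a := w'X, b := w'Xt and u := X/a - Xt/b.  Expanding the definitions
   with X'WX = w'X for binary X gives the exact identity
     T_t(X, delta) - e(X) = a (u'Au + delta u'Wu),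
   and u = 0 when X = Xt.  Since u'Au >= lam0 u'Wu (Rayleigh bound for
   W^{-1/2} A W^{-1/2} applied to W^{1/2} u, proved through the spectral
   theorem over the complexification), the right-hand side is nonnegative
   whenever delta >= -lam0. *)

Section HermitianRayleigh.
Variables (C : numClosedFieldType) (n : nat) (M : 'M[C]_n).
Hypothesis hermM : M \is hermsymmx.

Lemma spectral_diag_eigenvalue j : eigenvalue M (spectral_diag M 0 j).
Proof.
set P := spectralmx M; set d := spectral_diag M.
have unitaryP : P \is unitarymx := spectral_unitarymx M.
have /orthomx_spectralP := hermitian_normalmx hermM.
rewrite -/P -/d (invmx_unitary unitaryP) => defM.
have PPt : P *m P^t* = 1%:M by apply/unitarymxP.
apply/eigenvalueP; exists ('e_j *m P).
  have ejd : ('e_j : 'rV[C]_n) *m diag_mx d = d 0 j *: 'e_j.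
    rewrite mul_mx_diag; apply/matrixP=> a b; rewrite !mxE ord1 eqxx /=.
    by case: eqP => [->|]; rewrite ?mulr0 ?mul0r ?mulr1 ?mul1r.
  by rewrite defM !mulmxA -(mulmxA _ P) PPt mulmx1 ejd scalemxAl.
apply/negP => /eqP /(congr1 (mulmx^~ (invmx P))).
rewrite mulmxK ?spectral_unit // mul0mx => /matrixP /(_ 0 j).
by rewrite !mxE !eqxx => /eqP; rewrite oner_eq0.
Qed.

Lemma hermitian_rayleigh_ge (l : C) :
  (forall a, a \is Num.real -> eigenvalue M a -> l <= a) ->
  forall u : 'rV[C]_n, l * (u *m u^t*) 0 0 <= (u *m M *m u^t*) 0 0.
Proof.
move=> lb u.
set P := spectralmx M; set d := spectral_diag M.
have unitaryP : P \is unitarymx := spectral_unitarymx M.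
have /orthomx_spectralP := hermitian_normalmx hermM.
rewrite -/P -/d (invmx_unitary unitaryP) => defM.
have PtP : P^t* *m P = 1%:M by rewrite -(invmx_unitary unitaryP) mulVmx ?spectral_unit.
have d_ge j : l <= d 0 j.
  apply: lb; last exact: spectral_diag_eigenvalue.
  exact: (mxOverP (hermitian_spectral_diag_real hermM)).
set z := u *m P^t*.
have zt : z^t* = P *m u^t* by rewrite /z trmx_mul map_mxM trmxCK.
have -> : u *m u^t* = z *m z^t* by rewrite zt /z mulmxA -(mulmxA u) PtP mulmx1.
have -> : u *m M *m u^t* = z *m diag_mx d *m z^t* by rewrite zt defM /z !mulmxA.
rewrite mul_mx_diag !mxE mulr_sumr; apply: ler_sum => j _; rewrite !mxE.
move: (\sum_k _) => y.
by rewrite [y * d 0 j]mulrC -mulrA; exact: (ler_wpM2r (mul_conjC_ge0 y) (d_ge j)).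
Qed.

End HermitianRayleigh.

Lemma symmetric_rayleigh_ge (R : rcfType) n (M : 'M[R]_n) (l : R) :
  M^T = M -> (forall a, eigenvalue M a -> l <= a) ->
  forall v : 'cV[R]_n, l * (v^T *m v) 0 0 <= (v^T *m M *m v) 0 0.
Proof.
move=> symM lb v.
pose f := real_complex R.
have conj_f x : (f x)^* = f x by apply: conj_Creal; apply/complex_realP; exists x.
have hermMc : map_mx f M \is hermsymmx.
  apply/is_hermitianmxP; rewrite expr0 scale1r; apply/matrixP=> i j.
  by rewrite !mxE conj_f -[in LHS]symM mxE.
have vt : (map_mx f v^T)^t* = map_mx f v by apply/matrixP=> i j; rewrite !mxE conj_f.
have := @hermitian_rayleigh_ge _ _ _ hermMc (f l) _ (map_mx f v^T).
rewrite vt -!map_mxM !mxE -rmorphM lecR; apply => a /complex_realP [k ->].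
rewrite !eigenvalue_root_char -map_char_poly fmorph_root -eigenvalue_root_char.
by move/lb; rewrite lecR.
Qed.

Definition bform {R : pzRingType} {n : nat} (B : 'M[R]_n) (u v : 'cV[R]_n) : R :=
  (u^T *m B *m v) 0 0.

Lemma weighted_rayleigh_ge (R : rcfType) n (A : 'M[R]_n) (w : 'cV[R]_n) l :
  A^T = A -> (forall i, 0 < w i 0) ->
  (forall a, eigenvalue (Wisqrt w *m A *m Wisqrt w) a -> l <= a) ->
  forall v, l * bform (Wdiag w) v v <= bform A v v.
Proof.
move=> symA w_gt0 lb v.
pose D := diag_mx (\row_i Num.sqrt (w i 0)).
have sqrt_neq0 i : Num.sqrt (w i 0) != 0 by rewrite gt_eqF // sqrtr_gt0.
have SD : Wisqrt w *m D = 1%:M.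
  rewrite mulmx_diag -diag_const_mx; congr diag_mx.
  by apply/matrixP=> i j; rewrite !mxE mulVf.
have DS : D *m Wisqrt w = 1%:M.
  rewrite mulmx_diag -diag_const_mx; congr diag_mx.
  by apply/matrixP=> i j; rewrite !mxE mulfV.
have DD : D *m D = Wdiag w.
  rewrite mulmx_diag; congr diag_mx.
  by apply/matrixP=> i j; rewrite !mxE -expr2 sqr_sqrtr ?ord1 // ltW.
have symS : (Wisqrt w *m A *m Wisqrt w)^T = Wisqrt w *m A *m Wisqrt w.
  by rewrite !trmx_mul /Wisqrt tr_diag_mx symA mulmxA.
have := symmetric_rayleigh_ge symS lb (D *m v).
rewrite trmx_mul tr_diag_mx -/D.
have -> : v^T *m D *m (D *m v) = v^T *m Wdiag w *m v by rewrite -DD !mulmxA.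
by rewrite !mulmxA -(mulmxA v^T D) DS mulmx1 -(mulmxA _ (Wisqrt w) D) SD mulmx1.
Qed.

Section BilinearForm.
Variables (R : comPzRingType) (n : nat).
Implicit Types (B : 'M[R]_n) (x y z : 'cV[R]_n).

Lemma bformDl B x y z : bform B (x + y) z = bform B x z + bform B y z.
Proof. by rewrite /bform linearD /= !mulmxDl mxE. Qed.

Lemma bformZl B c x z : bform B (c *: x) z = c * bform B x z.
Proof. by rewrite /bform linearZ /= -!scalemxAl mxE. Qed.

Lemma bformBl B x y z : bform B (x - y) z = bform B x z - bform B y z.
Proof. by rewrite -scaleN1r bformDl bformZl mulN1r. Qed.

Lemma bformDr B x y z : bform B z (x + y) = bform B z x + bform B z y.
Proof. by rewrite /bform mulmxDr mxE. Qed.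

Lemma bformZr B c x z : bform B z (c *: x) = c * bform B z x.
Proof. by rewrite /bform -scalemxAr mxE. Qed.

Lemma bformBr B x y z : bform B z (x - y) = bform B z x - bform B z y.
Proof. by rewrite -scaleN1r bformDr bformZr mulN1r. Qed.

Lemma bform0l B z : bform B 0 z = 0.
Proof. by rewrite /bform trmx0 !mul0mx mxE. Qed.

Lemma bformC B x y : B^T = B -> bform B x y = bform B y x.
Proof.
move=> symB; rewrite /bform.
transitivity ((x^T *m B *m y)^T 0 0); first by rewrite [RHS]mxE.
by rewrite !trmx_mul symB trmxK mulmxA.
Qed.

End BilinearForm.

Section WeightedForm.
Variables (R : rcfType) (n : nat).
Implicit Types (B : 'M[R]_n) (x y w : 'cV[R]_n).

Lemma dotv_bform1 x y : dotv x y = bform 1%:M x y.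
Proof. by rewrite /dotv /bform mulmx1. Qed.

Lemma dotv_mulmxl B x y : dotv (B *m x) y = bform B^T x y.
Proof. by rewrite dotv_bform1 /bform mulmx1 trmx_mul. Qed.

Lemma bform_WdiagE w x y : bform (Wdiag w) x y = \sum_i x i 0 * w i 0 * y i 0.
Proof. by rewrite /bform mul_mx_diag mxE; apply: eq_bigr => i _; rewrite !mxE. Qed.

Lemma dotvE x y : dotv x y = \sum_i x i 0 * y i 0.
Proof. by rewrite /dotv mxE; apply: eq_bigr => i _; rewrite mxE. Qed.

Lemma bform_Wdiag_binvec w x : binvec x -> bform (Wdiag w) x x = dotv w x.
Proof.
move=> binx; rewrite bform_WdiagE dotvE; apply: eq_bigr => i _.
by case: (binx i) => ->; rewrite ?mulr0 ?mul0r ?mulr1 ?mul1r.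
Qed.

Lemma bform_Wdiag_const1 w x : bform (Wdiag w) (const_mx 1) x = dotv w x.
Proof. by rewrite bform_WdiagE dotvE; apply: eq_bigr => i _; rewrite mxE mul1r. Qed.

Lemma bform_Wdiag_ge0 w x : (forall i, 0 < w i 0) -> 0 <= bform (Wdiag w) x x.
Proof.
move=> w_gt0; rewrite bform_WdiagE; apply: sumr_ge0 => i _.
by rewrite mulrAC; apply: mulr_ge0; [rewrite -expr2; exact: sqr_ge0 | exact: ltW].
Qed.

Lemma dotv_admissible_gt0 w X : (forall i, 0 < w i 0) -> admissible X -> 0 < dotv w X.
Proof.
move=> w_gt0 [binX X_neq0].
have [i Xi1] : exists i, X i 0 = 1.
  have [/existsP [i /eqP]|/existsPn Xneq1] := boolP [exists i, X i 0 == 1].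
    by exists i.
  case: X_neq0; apply/matrixP => i j; rewrite ord1 !mxE.
  by case: (binX i) => // Xi1; move: (Xneq1 i); rewrite Xi1 eqxx.
rewrite dotvE (bigD1 i) //= Xi1 mulr1 ltr_pwDl //.
apply: sumr_ge0 => j _; case: (binX j) => ->; rewrite ?mulr0 ?mulr1 //; exact: ltW.
Qed.

End WeightedForm.

Section AuxiliaryFunction.
Variables (R : rcfType) (n : nat) (A : 'M[R]_n) (w Xt : 'cV[R]_n).
Hypotheses (symA : A^T = A) (w_gt0 : forall i, 0 < w i 0) (admXt : admissible Xt).

Definition normalized_gap (X : 'cV[R]_n) : 'cV[R]_n :=
  (dotv w X)^-1 *: X - (dotv w Xt)^-1 *: Xt.

Lemma T_fun_sub_e_fun X delta : admissible X ->
  T_fun A w Xt X delta - e_fun A w X =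
  dotv w X * (bform A (normalized_gap X) (normalized_gap X)
              + delta * bform (Wdiag w) (normalized_gap X) (normalized_gap X)).
Proof.
move=> admX; have a_neq0 := lt0r_neq0 (dotv_admissible_gt0 w_gt0 admX).
have b_neq0 := lt0r_neq0 (dotv_admissible_gt0 w_gt0 admXt).
rewrite /T_fun /e_fun /grad_e /normalized_gap.
rewrite -[qform A X]/(bform A X X) -[qform A Xt]/(bform A Xt Xt).
rewrite -[(_ *m Wdiag w *m X) 0 0]/(bform (Wdiag w) (const_mx 1 - 2%:R *: Xt) X).
rewrite dotv_bform1 bformBl !bformZl -!dotv_bform1 dotv_mulmxl symA.
rewrite !(bformBl, bformBr, bformZl, bformZr) bform_Wdiag_const1.
rewrite (bformC X Xt symA) (bformC X Xt (tr_diag_mx _)).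
have [[binX _] [binXt _]] := (admX, admXt).
rewrite !bform_Wdiag_binvec //.
move: a_neq0 b_neq0; set a := dotv w X; set b := dotv w Xt => a_neq0 b_neq0.
by field; rewrite a_neq0 b_neq0.
Qed.

Lemma T_fun_Xt delta : T_fun A w Xt Xt delta = e_fun A w Xt.
Proof.
apply/eqP; rewrite -subr_eq0 T_fun_sub_e_fun // /normalized_gap subrr.
by rewrite !bform0l mulr0 addr0 mulr0.
Qed.

Variable lam0 : R.
Hypothesis lam0_le : forall a, eigenvalue (Wisqrt w *m A *m Wisqrt w) a -> lam0 <= a.

Lemma e_fun_le_T_fun X delta :
  - lam0 <= delta -> admissible X -> e_fun A w X <= T_fun A w Xt X delta.
Proof.
move=> delta_ge admX; rewrite -subr_ge0 T_fun_sub_e_fun //.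
apply: mulr_ge0; first exact/ltW/dotv_admissible_gt0.
set u := normalized_gap X.
have rayleigh := weighted_rayleigh_ge symA w_gt0 lam0_le u.
have : 0 <= (delta + lam0) * bform (Wdiag w) u u.
  rewrite mulr_ge0 ?bform_Wdiag_ge0 //; lra.
rewrite mulrDl; lra.
Qed.

End AuxiliaryFunction.

Theorem lemma2 (R : rcfType) (n : nat) (A : 'M[R]_n) (w Xt : 'cV[R]_n) (lam0 : R) :
  A^T = A ->
  (forall i, 0 < w i 0) ->
  admissible Xt ->
  smallest_eigenvalue (Wisqrt w *m A *m Wisqrt w) lam0 ->
  (forall delta : R, - lam0 <= delta ->
     (forall X, admissible X -> e_fun A w X <= T_fun A w Xt X delta) /\
     T_fun A w Xt Xt delta = e_fun A w Xt) /\
  pseudo_bound (T_fun A w Xt) (e_fun A w) Xt.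
Proof.
move=> symA w_gt0 admXt [_ lam0_le].
have auxiliary delta : - lam0 <= delta ->
    (forall X, admissible X -> e_fun A w X <= T_fun A w Xt X delta) /\
    T_fun A w Xt Xt delta = e_fun A w Xt.
  move=> delta_ge; split; last exact: T_fun_Xt.
  by move=> X; apply: (e_fun_le_T_fun symA w_gt0 admXt lam0_le).
split; first exact: auxiliary.
by exists (- lam0); apply: auxiliary.
Qed.
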